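(* Let $a\in(0,1]$, $b>1$, $c\in(0,+\infty)$, and let $\underline F:[0,\infty)\to[0,\infty)$ be defined by $\underline F(s)=c|s^a-1|^{1/a}$ for $s\in[1/b,b]$, $\underline F(s)=\underline F(b)+\kappa(s-b)$ for $s\ge b$, where $\kappa$ is the left derivative at $b$ of $s\mapsto c|s^a-1|^{1/a}$, and $\underline F(s)=s\,\underline F(1/s)$ for $0<s\le 1/b$ (extended by continuity at $0$), so that $\underline F\in\Gamma_0^s(\mathbb{R}_+)$ is linear on $[0,1/b]$ and on $[b,\infty)$. Then for every $s\ge0$, $$\lim_{n\to\infty}T_a^{(n)}(\underline F)(s)=c|s^a-1|^{1/a}.$$
   Context: $\Gamma_0(\mathbb{R}_+)$ is the set of functions $F:[0,\infty)\to[0,\infty]$ that are convex, lower semicontinuous, with $F(1)=0$. For $F\in\Gamma_0(\mathbb{R}_+)$: $\mathrm{rec}(F)(r)=\lim_{\alpha\to\infty}F(1+\alpha r)/\alpha$, $F'_\infty:=\mathrm{rec}(F)(1)$; the perspective function is $\hat F(r,t)=tF(r/t)$ for $t>0$, $\hat F(r,0)=\mathrm{rec}(F)(r)$; the reverse entropy is $R(s)=sF(1/s)$ for $s>0$, $R(0)=F'_\infty$. $\Gamma_0^s(\mathbb{R}_+)$ is the set of $F\in\Gamma_0(\mathbb{R}_+)$ with $F=R$. The marginal perspective function $H_F$ is the lower semicontinuous envelope of $\tilde H_F(r_1,r_2)=\inf_{\theta>0}[\hat F(\theta,r_1)+\hat F(\theta,r_2)]$. For $a\in(0,1]$, $T_a:\Gamma_0(\mathbb{R}_+)\to\Gamma_0^s(\mathbb{R}_+)$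 is $T_a(F)(s)=2^{1/a-1}H_F(1,s)$, and $T_a^{(n)}$ is its $n$-th iterate. *)

From Stdlib Require Import Reals Lra ClassicalEpsilon.
Open Scope R_scope.

Inductive ER : Type := Fin (x : R) | PInf.

Definition ER_le (u v : ER) : Prop :=
  match u, v with
  | Fin x, Fin y => x <= y
  | _, PInf => True
  | PInf, Fin _ => False
  end.

Definition ER_lt (u v : ER) : Prop := ER_le u v /\ u <> v.

Definition ER_add (u v : ER) : ER :=
  match u, v with Fin x, Fin y => Fin (x + y) | _, _ => PInf end.

Definition ER_scale (t : R) (u : ER) : ER :=
  match u with Fin x => Fin (t * x) | PInf => PInf end.

Definition ER_div (u : ER) (t : R) : ER :=
  match u with Fin x => Fin (x / t) | PInf => PInf end.

Definition is_glb (S : ER -> Prop) (l : ER) : Prop :=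
  (forall v, S v -> ER_le l v) /\ (forall m, (forall v, S v -> ER_le m v) -> ER_le m l).
Definition is_lub (S : ER -> Prop) (l : ER) : Prop :=
  (forall v, S v -> ER_le v l) /\ (forall m, (forall v, S v -> ER_le v m) -> ER_le l m).

Definition ER_inf (S : ER -> Prop) : ER :=
  match excluded_middle_informative (exists l, is_glb S l) with
  | left H => proj1_sig (constructive_indefinite_description _ H)
  | right _ => PInf
  end.
Definition ER_sup (S : ER -> Prop) : ER :=
  match excluded_middle_informative (exists l, is_lub S l) with
  | left H => proj1_sig (constructive_indefinite_description _ H)
  | right _ => PInf
  end.

Definition ER_lim_infty (h : R -> ER) (L : ER) : Prop :=
  match L with
  | Fin l => forall eps, eps > 0 -> exists M, forall al, al > M ->
               exists x, h al = Fin x /\ Rabs (x - l) < eps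
  | PInf => forall K, exists M, forall al, al > M -> ER_lt (Fin K) (h al)
  end.

Definition ER_limit_infty (h : R -> ER) : ER :=
  match excluded_middle_informative (exists L, ER_lim_infty h L) with
  | left H => proj1_sig (constructive_indefinite_description _ H)
  | right _ => PInf
  end.

(** Functions F : [0,oo) -> [0,oo] are represented as R -> ER
    (values at negative arguments are never used). *)

Definition recF (F : R -> ER) (r : R) : ER :=
  ER_limit_infty (fun al => ER_div (F (1 + al * r)) al).

Definition persp (F : R -> ER) (r t : R) : ER :=
  if Rlt_dec 0 t then ER_scale t (F (r / t)) else recF F r.

Definition Htilde (F : R -> ER) (r1 r2 : R) : ER :=
  ER_inf (fun v => exists th, th > 0 /\ v = ER_add (persp F th r1) (persp F th r2)).

Definition quad (r1 r2 : R) : Prop := 0 <= r1 /\ 0 <= r2.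

Definition lsc_quad (g : R -> R -> ER) : Prop :=
  forall x1 x2, quad x1 x2 -> forall t, ER_lt (Fin t) (g x1 x2) ->
    exists d, d > 0 /\ forall y1 y2, quad y1 y2 ->
      Rabs (y1 - x1) < d -> Rabs (y2 - x2) < d -> ER_lt (Fin t) (g y1 y2).

Definition lsc_env (f : R -> R -> ER) (x1 x2 : R) : ER :=
  ER_sup (fun v => exists g : R -> R -> ER, lsc_quad g /\
            (forall y1 y2, quad y1 y2 -> ER_le (g y1 y2) (f y1 y2)) /\
            v = g x1 x2).

Definition HF (F : R -> ER) (r1 r2 : R) : ER := lsc_env (Htilde F) r1 r2.

Definition Ta (a : R) (F : R -> ER) : R -> ER :=
  fun s => ER_scale (Rpower 2 (1 / a - 1)) (HF F 1 s).

Definition Ta_iter (a : R) (n : nat) (F : R -> ER) : R -> ER := Nat.iter n (Ta a) F.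

(** real power with the convention 0^y = 0 (used only for y > 0) *)
Definition rpow (x y : R) : R := if Req_EM_T x 0 then 0 else Rpower x y.

Definition gfun (a c s : R) : R := c * rpow (Rabs (rpow s a - 1)) (1 / a).

Definition left_deriv (f : R -> R) (x l : R) : Prop :=
  forall eps, eps > 0 -> exists d, d > 0 /\ forall h, 0 < h < d ->
    Rabs ((f x - f (x - h)) / h - l) < eps.

Definition ER_seq_cv (u : nat -> ER) (l : R) : Prop :=
  forall eps, eps > 0 -> exists N : nat, forall n, (n >= N)%nat ->
    exists x, u n = Fin x /\ Rabs (x - l) < eps.

From Stdlib Require Import Reals Lra Lia ClassicalEpsilon Classical.
Open Scope R_scope.

(* With p = 1/a, g is convex on [0, oo) and is the upper envelope of its
   tangent lines tangent(u)(x) = alpha(u) + beta(u) x, the tangent at x = u^p.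
   Say that F is pinched at level X if tangent(u) <= F <= g for all u in (1/X, X).
   - T_a never pushes a nonnegative F above g: an explicit theta in the definition
     of tilde H_F gives tilde H_F(1, y) <= 2^(1 - 1/a) g(y), and lower
     semicontinuity handles y = 0.
   - The tangents with parameters (1+w)/2 and (1+1/w)/2 have opposite slopes, so
     their perspectives add up to a linear minorant of tilde H_F, which after
     rescaling is tangent(w).  Hence T_a maps "pinched at level X" to "pinched at
     level 2X - 1".
   - F_b is pinched at level b^a: it equals g on [1/b, b], is a line of slope kappa
     between the tangent slopes on [b, oo), and is symmetric under F(x) = x F(1/x).
   The levels X_(n+1) = 2 X_n - 1 tend to infinity, so at s > 0 the tangent touching
   g at s eventually pinches the iterates to g(s), while at s = 0 the intercepts
   alpha(u) tend to g(0) = c as u -> 0. *)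

Lemma Rpower_pos x y : 0 < Rpower x y.
Proof. apply exp_pos. Qed.

Lemma Rpower_one_base y : Rpower 1 y = 1.
Proof. unfold Rpower; rewrite ln_1, Rmult_0_r; apply exp_0. Qed.

Lemma rpow_pos x y : 0 < x -> rpow x y = Rpower x y.
Proof. intros; unfold rpow; destruct Req_EM_T; [lra | auto]. Qed.

Lemma rpow_0 y : rpow 0 y = 0.
Proof. unfold rpow; destruct Req_EM_T; [auto | lra]. Qed.

Lemma rpow_one_base y : rpow 1 y = 1.
Proof. rewrite rpow_pos by lra; apply Rpower_one_base. Qed.

Lemma rpow_nonneg x y : 0 <= rpow x y.
Proof. unfold rpow; destruct Req_EM_T; [lra | left; apply Rpower_pos]. Qed.

Lemma rpow_gt0 x y : 0 < x -> 0 < rpow x y.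
Proof. intros; rewrite rpow_pos; auto; apply Rpower_pos. Qed.

Lemma rpow_1 x : 0 <= x -> rpow x 1 = x.
Proof.
  intros hx; destruct (Req_dec x 0) as [-> | ]; [apply rpow_0 |].
  rewrite rpow_pos by lra; apply Rpower_1; lra.
Qed.

Lemma rpow_plus x y z : rpow x (y + z) = rpow x y * rpow x z.
Proof. unfold rpow; destruct Req_EM_T; [ring | apply Rpower_plus]. Qed.

Lemma rpow_mult x y z : 0 <= x -> 0 <= y -> rpow (x * y) z = rpow x z * rpow y z.
Proof.
  intros hx hy.
  destruct (Req_dec x 0) as [-> | ]; [rewrite Rmult_0_l, rpow_0; ring |].
  destruct (Req_dec y 0) as [-> | ]; [rewrite Rmult_0_r, rpow_0; ring |].
  rewrite !rpow_pos by nra; symmetry; apply Rpower_mult_distr; lra.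
Qed.

Lemma rpow_rpow x y z : 0 <= x -> rpow (rpow x y) z = rpow x (y * z).
Proof.
  intros hx; destruct (Req_dec x 0) as [-> | ]; [rewrite !rpow_0; auto |].
  rewrite (rpow_pos x y), (rpow_pos x), rpow_pos by (try apply Rpower_pos; lra).
  apply Rpower_mult.
Qed.

Lemma rpow_rpow_inv x a : 0 < a -> 0 <= x -> rpow (rpow x a) (1 / a) = x.
Proof.
  intros; rewrite rpow_rpow by lra.
  replace (a * (1 / a)) with 1 by (field; lra); apply rpow_1; auto.
Qed.

Lemma rpow_inv x y : 0 < x -> rpow (/ x) y = / rpow x y.
Proof.
  intros; rewrite !rpow_pos by (try apply Rinv_0_lt_compat; lra).
  unfold Rpower; rewrite ln_Rinv, <- exp_Ropp by lra; f_equal; ring.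
Qed.

Lemma rpow_div x y z : 0 <= x -> 0 < y -> rpow (x / y) z = rpow x z / rpow y z.
Proof.
  intros; unfold Rdiv; rewrite rpow_mult, rpow_inv; auto.
  left; apply Rinv_0_lt_compat; lra.
Qed.

Lemma rpow_le x1 x2 y : 0 <= y -> 0 <= x1 <= x2 -> rpow x1 y <= rpow x2 y.
Proof.
  intros hy [h1 h2]; destruct (Req_dec x1 0) as [-> | ].
  - rewrite rpow_0; apply rpow_nonneg.
  - rewrite !rpow_pos by lra; apply Rle_Rpower_l; lra.
Qed.

Lemma rpow_lt x1 x2 y : 0 < y -> 0 <= x1 < x2 -> rpow x1 y < rpow x2 y.
Proof.
  intros hy [h1 h2]; destruct (Req_dec x1 0) as [-> | ].
  - rewrite rpow_0; apply rpow_gt0; lra.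
  - rewrite !rpow_pos by lra; apply Rlt_Rpower_l; lra.
Qed.

Lemma rpow_le1 x y : 0 <= y -> 0 <= x <= 1 -> rpow x y <= 1.
Proof. intros; rewrite <- (rpow_one_base y); apply rpow_le; lra. Qed.

Lemma rpow_ge1 x y : 0 <= y -> 1 <= x -> 1 <= rpow x y.
Proof. intros; rewrite <- (rpow_one_base y) at 1; apply rpow_le; lra. Qed.

Lemma rpow_lt1 x y : 0 < y -> 0 <= x < 1 -> rpow x y < 1.
Proof. intros; rewrite <- (rpow_one_base y); apply rpow_lt; lra. Qed.

(* Elementary lower bound z^q >= 1 - q (1 - z) / z, from exp t >= 1 + t and ln z >= 1 - 1/z. *)
Lemma rpow_lower_bound z q : 0 < z <= 1 -> 0 <= q -> 1 - q * (1 - z) / z <= rpow z q.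
Proof.
  intros hz hq; rewrite rpow_pos by lra; unfold Rpower.
  assert (E := exp_ineq1_le (q * ln z)).
  assert (L := exp_ineq1_le (ln (/ z))).
  rewrite exp_ln, ln_Rinv in L by (try apply Rinv_0_lt_compat; lra).
  assert (q * (1 - / z) <= q * ln z) by (apply Rmult_le_compat_l; lra).
  replace (q * (1 - z) / z) with (- (q * (1 - / z))) by (field; lra); lra.
Qed.

(* Bernoulli's inequality x^p >= 1 + p (x - 1) for real p >= 1, by the mean value theorem. *)
Lemma bernoulli x p : 1 <= p -> 0 <= x -> 1 + p * (x - 1) <= rpow x p.
Proof.
  intros hp hx; destruct (Req_dec x 0) as [-> | hx0]; [rewrite rpow_0; nra |].
  rewrite rpow_pos by lra.
  set (f := fun z => Rpower z p - p * z).
  set (f' := fun z => p * Rpower z (p - 1) - p * 1).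
  assert (D : forall z, 0 < z -> derivable_pt_lim f z (f' z)).
  { intros z hz; apply (derivable_pt_lim_minus (fun z => Rpower z p) (fun z => p * z)).
    - apply derivable_pt_lim_power; auto.
    - apply (derivable_pt_lim_scal id p z 1), derivable_pt_lim_id. }
  destruct (Rtotal_order x 1) as [hlt | [-> | hgt]].
  - destruct (MVT_cor2 f f' x 1 hlt) as [z [E hz]]; [intros; apply D; lra |].
    unfold f, f' in E; rewrite Rpower_one_base in E.
    assert (Rpower z (p - 1) <= Rpower 1 (p - 1)) by (apply Rle_Rpower_l; lra).
    rewrite Rpower_one_base in *.
    assert (0 <= (p - p * Rpower z (p - 1)) * (1 - x)) by (apply Rmult_le_pos; nra).
    nra.
  - rewrite Rpower_one_base; lra.
  - destruct (MVT_cor2 f f' 1 x hgt) as [z [E hz]]; [intros; apply D; lra |].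
    unfold f, f' in E; rewrite Rpower_one_base in E.
    assert (Rpower 1 (p - 1) <= Rpower z (p - 1)) by (apply Rle_Rpower_l; lra).
    rewrite Rpower_one_base in *.
    assert (0 <= (p * Rpower z (p - 1) - p) * (x - 1)) by (apply Rmult_le_pos; nra).
    nra.
Qed.

(* Weighted power-mean (Jensen) inequality for t |-> t^p, p >= 1:
   (A + B)^p <= A^p / l^(p-1) + B^p / (1-l)^(p-1), obtained by averaging
   Bernoulli's inequality at A/(l S) and B/((1-l) S) with weights l, 1-l. *)
Lemma power_mean_ineq A B l p : 1 <= p -> 0 <= A -> 0 <= B -> 0 < l < 1 ->
  rpow (A + B) p <= rpow A p / rpow l (p - 1) + rpow B p / rpow (1 - l) (p - 1).
Proof.
  intros hp hA hB hl.
  destruct (Req_dec (A + B) 0) as [h0 | hS].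
  { replace A with 0 by lra; replace B with 0 by lra.
    rewrite Rplus_0_r, rpow_0; unfold Rdiv; lra. }
  set (S := A + B); assert (hS' : 0 < S) by (unfold S; lra).
  assert (b1 := bernoulli (A / (l * S)) p hp).
  assert (b2 := bernoulli (B / ((1 - l) * S)) p hp).
  assert (p1 : 0 < l * S) by nra; assert (p2 : 0 < (1 - l) * S) by nra.
  specialize (b1 ltac:(apply Rmult_le_pos; [lra | left; apply Rinv_0_lt_compat; lra])).
  specialize (b2 ltac:(apply Rmult_le_pos; [lra | left; apply Rinv_0_lt_compat; lra])).
  rewrite rpow_div, rpow_mult in b1, b2 by lra.
  assert (el : rpow l p = l * rpow l (p - 1)).
  { replace p with (1 + (p - 1)) at 1 by ring; rewrite rpow_plus, rpow_1; lra. }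
  assert (el' : rpow (1 - l) p = (1 - l) * rpow (1 - l) (p - 1)).
  { replace p with (1 + (p - 1)) at 1 by ring; rewrite rpow_plus, rpow_1; lra. }
  rewrite el in b1; rewrite el' in b2.
  assert (q1 : 0 < rpow l (p - 1)) by (apply rpow_gt0; lra).
  assert (q2 : 0 < rpow (1 - l) (p - 1)) by (apply rpow_gt0; lra).
  assert (qS : 0 < rpow S p) by (apply rpow_gt0; lra).
  set (a1 := rpow A p) in *; set (a2 := rpow B p) in *.
  set (r1 := rpow l (p - 1)) in *; set (r2 := rpow (1 - l) (p - 1)) in *.
  set (s := rpow S p) in *.
  assert (l * (a1 / (l * r1 * s)) + (1 - l) * (a2 / ((1 - l) * r2 * s))
          = (a1 / r1 + a2 / r2) / s) by (field; repeat split; lra).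
  assert (l * (1 + p * (A / (l * S) - 1)) + (1 - l) * (1 + p * (B / ((1 - l) * S) - 1)) = 1)
    by (unfold S; field; split; lra).
  assert (1 <= (a1 / r1 + a2 / r2) / s) by nra.
  apply Rmult_le_reg_r with (/ s); [apply Rinv_0_lt_compat; lra |].
  rewrite Rinv_r by lra; unfold Rdiv in *; lra.
Qed.

Definition sp (q z : R) : R := if Rle_dec 0 z then rpow z q else - rpow (- z) q.

Lemma sp_nonneg q z : 0 <= z -> sp q z = rpow z q.
Proof. intros; unfold sp; destruct Rle_dec; [auto | lra]. Qed.

Lemma sp_neg q z : z < 0 -> sp q z = - rpow (- z) q.
Proof. intros; unfold sp; destruct Rle_dec; [lra | auto]. Qed.

Lemma sp_zero q : sp q 0 = 0.
Proof. rewrite sp_nonneg, rpow_0; lra. Qed.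

Lemma sp_odd q z : sp q (- z) = - sp q z.
Proof.
  destruct (Rtotal_order z 0) as [h | [-> | h]].
  - rewrite sp_nonneg, sp_neg by lra; ring.
  - rewrite Ropp_0, sp_zero; ring.
  - rewrite sp_neg, sp_nonneg, Ropp_involutive by lra; ring.
Qed.

Lemma sp_mul q z k : 0 < k -> sp q (z * k) = sp q z * rpow k q.
Proof.
  intros hk; destruct (Rle_dec 0 z).
  - rewrite !sp_nonneg by nra; apply rpow_mult; lra.
  - rewrite !sp_neg by nra; replace (- (z * k)) with (- z * k) by ring.
    rewrite rpow_mult; lra.
Qed.

Lemma sp_mono q z1 z2 : 0 <= q -> z1 <= z2 -> sp q z1 <= sp q z2.
Proof.
  intros hq h; destruct (Rle_dec 0 z1), (Rle_dec 0 z2); try lra.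
  - rewrite !sp_nonneg by lra; apply rpow_le; lra.
  - rewrite sp_neg, sp_nonneg by lra.
    assert (0 <= rpow (- z1) q) by apply rpow_nonneg.
    assert (0 <= rpow z2 q) by apply rpow_nonneg; lra.
  - rewrite !sp_neg by lra; assert (rpow (- z2) q <= rpow (- z1) q) by (apply rpow_le; lra); lra.
Qed.

Lemma sp_times_self q z : sp q z * z = rpow (Rabs z) (q + 1).
Proof.
  rewrite rpow_plus; destruct (Rle_dec 0 z).
  - rewrite sp_nonneg, Rabs_right, rpow_1; lra.
  - rewrite sp_neg, Rabs_left, rpow_1; lra.
Qed.

Lemma ER_le_trans u v w : ER_le u v -> ER_le v w -> ER_le u w.
Proof. destruct u, v, w; simpl; auto; try lra; tauto. Qed.

Lemma ER_le_PInf u : ER_le u PInf.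
Proof. destruct u; simpl; auto. Qed.

Lemma ER_scale_le t u v : 0 < t -> ER_le u v -> ER_le (ER_scale t u) (ER_scale t v).
Proof. destruct u, v; simpl; auto; intros; apply Rmult_le_compat_l; lra. Qed.

Lemma ER_add_le u v u' v' : ER_le u u' -> ER_le v v' -> ER_le (ER_add u v) (ER_add u' v').
Proof. destruct u, v, u', v'; simpl; auto; try tauto; lra. Qed.

Lemma ER_not_le u x : ~ ER_le u (Fin x) -> ER_lt (Fin x) u.
Proof.
  destruct u; simpl; intros H; split; simpl; auto; try lra; try discriminate.
  intros E; injection E; lra.
Qed.

Lemma ER_sandwich v lo hi : ER_le (Fin lo) v -> ER_le v (Fin hi) ->
  exists x, v = Fin x /\ lo <= x <= hi.
Proof. destruct v; simpl; intros; [exists x; auto | tauto]. Qed.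

(* Every set of ER bounded below by a real has a greatest lower bound
   (the empty set, and sets reduced to PInf, have glb PInf). *)
Lemma glb_exists S m : (forall v, S v -> ER_le (Fin m) v) -> exists l, is_glb S l.
Proof.
  intros Hm; destruct (classic (exists r, S (Fin r))) as [[r0 Hr0] | Hno].
  - set (E := fun z => S (Fin (- z))).
    assert (hb : bound E).
    { exists (- m); intros z hz; specialize (Hm _ hz); simpl in Hm; lra. }
    assert (he : exists z, E z) by (exists (- r0); unfold E; rewrite Ropp_involutive; auto).
    destruct (completeness E hb he) as [L [hL1 hL2]].
    exists (Fin (- L)); split.
    + intros [r |] hv; simpl; auto.
      assert (E (- r)) by (unfold E; rewrite Ropp_involutive; auto).
      specialize (hL1 _ H); lra.
    + intros [z |] hm'.
      * assert (L <= - z); [apply hL2; intros w hw; specialize (hm' _ hw); simpl in hm'; lra |].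
        simpl; lra.
      * specialize (hm' _ Hr0); simpl in hm'; tauto.
  - exists PInf; split; [| intros; apply ER_le_PInf].
    intros [r |] hv; [exfalso; apply Hno; eauto | simpl; auto].
Qed.

Lemma ER_inf_ge S w : (forall v, S v -> ER_le w v) -> ER_le w (ER_inf S).
Proof.
  intros H; unfold ER_inf; destruct excluded_middle_informative as [e | e];
    [| apply ER_le_PInf].
  destruct (constructive_indefinite_description _ e) as [l [h1 h2]]; simpl; auto.
Qed.

Lemma ER_inf_le S m v0 : (forall v, S v -> ER_le (Fin m) v) -> S v0 -> ER_le (ER_inf S) v0.
Proof.
  intros Hm Hv; unfold ER_inf; destruct excluded_middle_informative as [e | e].
  - destruct (constructive_indefinite_description _ e) as [l [h1 h2]]; simpl; auto.
  - exfalso; apply e; eapply glb_exists; eauto.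
Qed.

Lemma ER_sup_ge S v : S v -> ER_le v (ER_sup S).
Proof.
  intros H; unfold ER_sup; destruct excluded_middle_informative as [e | e];
    [| apply ER_le_PInf].
  destruct (constructive_indefinite_description _ e) as [l [h1 h2]]; simpl; auto.
Qed.

Lemma ER_sup_le S v0 M : S v0 -> (forall v, S v -> ER_le v (Fin M)) ->
  ER_le (ER_sup S) (Fin M).
Proof.
  intros H0 HM; unfold ER_sup; destruct excluded_middle_informative as [e | e].
  - destruct (constructive_indefinite_description _ e) as [l [h1 h2]]; simpl; auto.
  - exfalso; apply e.
    set (E := fun z => S (Fin z)).
    assert (hb : bound E) by (exists M; intros z hz; specialize (HM _ hz); simpl in HM; lra).
    assert (he : exists z, E z).
    { destruct v0 as [r |]; [exists r; auto | specialize (HM _ H0); simpl in HM; tauto]. }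
    destruct (completeness E hb he) as [L [hL1 hL2]].
    exists (Fin L); split.
    + intros [r |] hv; [simpl; apply hL1; auto | specialize (HM _ hv); simpl in HM; tauto].
    + intros [z |] hm'; simpl; auto.
      apply hL2; intros w hw; specialize (hm' _ hw); simpl in hm'; auto.
Qed.

(* x |-> A + B x is an affine minorant of F on [0, oo); such minorants yield lower
   bounds on the marginal perspective function. *)
Definition affine_minorant (F : R -> ER) (A B : R) : Prop :=
  forall x, 0 <= x -> ER_le (Fin (A + B * x)) (F x).

(* An affine minorant with slope B bounds the recession function from below:
   rec(F)(t) >= B t, since F(1 + al t) / al >= (A + B) / al + B t. *)
Lemma recF_ge F A B t : 0 <= t -> affine_minorant F A B -> ER_le (Fin (B * t)) (recF F t).
Proof.
  intros ht HL; unfold recF, ER_limit_infty.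
  destruct excluded_middle_informative as [e | e]; [| apply ER_le_PInf].
  destruct (constructive_indefinite_description _ e) as [[l |] HLim]; simpl; auto.
  simpl in HLim; destruct (Rle_dec (B * t) l) as [ok | nok]; auto; exfalso.
  set (eps := (B * t - l) / 2); assert (heps : eps > 0) by (unfold eps; lra).
  destruct (HLim eps heps) as [M HM].
  assert (hq : 0 <= Rabs (A + B) / eps) by (apply Rle_mult_inv_pos; [apply Rabs_pos | lra]).
  assert (hM : M <= Rmax M 0) by apply Rmax_l; assert (h0 : 0 <= Rmax M 0) by apply Rmax_r.
  set (al := Rmax M 0 + 1 + Rabs (A + B) / eps).
  destruct (HM al ltac:(unfold al; lra)) as [x [Hx Hab]].
  assert (hz := HL (1 + al * t) ltac:(unfold al in *; nra)).
  destruct (F (1 + al * t)) as [v |]; simpl in Hx, hz; [| discriminate].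
  injection Hx as <-.
  assert (Rabs (A + B) < al * eps).
  { replace (Rabs (A + B)) with (Rabs (A + B) / eps * eps) by (field; lra).
    apply Rmult_lt_compat_r; unfold al; lra. }
  assert (- (A + B) <= Rabs (A + B)) by (rewrite <- Rabs_Ropp; apply RRle_abs).
  assert (v / al >= (A + B) / al + B * t).
  { apply Rle_ge; apply Rmult_le_reg_r with al; [unfold al; lra |].
    field_simplify; unfold al in *; nra. }
  assert ((A + B) / al > - eps).
  { apply Rmult_lt_reg_r with al; [unfold al; lra |]. field_simplify; unfold al in *; lra. }
  apply Rabs_def2 in Hab; unfold eps in *; lra.
Qed.

Lemma persp_ge F A B t y : 0 < t -> 0 <= y -> affine_minorant F A B ->
  ER_le (Fin (A * y + B * t)) (persp F t y).
Proof.
  intros ht hy HL; unfold persp; destruct Rlt_dec as [h | h].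
  - assert (H := HL (t / y) ltac:(apply Rle_mult_inv_pos; lra)).
    destruct (F (t / y)); simpl in *; auto.
    replace (A * y + B * t) with (y * (A + B * (t / y))) by (field; lra).
    apply Rmult_le_compat_l; lra.
  - replace y with 0 by lra; rewrite Rmult_0_r, Rplus_0_l.
    apply (recF_ge F A B); auto; lra.
Qed.

Lemma persp_le F t y g : 0 < y -> ER_le (F (t / y)) (Fin g) ->
  ER_le (persp F t y) (Fin (y * g)).
Proof.
  intros hy H; unfold persp; destruct Rlt_dec; [| lra].
  destruct (F (t / y)); simpl in *; [apply Rmult_le_compat_l; lra | tauto].
Qed.

(* Two affine minorants with opposite slopes give an affine minorant of tilde H_F:
   the theta-terms cancel in hat F(theta, y1) + hat F(theta, y2). *)
Lemma Htilde_ge F A B A' B' y1 y2 : affine_minorant F A B -> affine_minorant F A' B' ->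
  B + B' = 0 -> 0 <= y1 -> 0 <= y2 -> ER_le (Fin (A * y1 + A' * y2)) (Htilde F y1 y2).
Proof.
  intros H1 H2 hB hy1 hy2; apply ER_inf_ge; intros v [t [ht ->]].
  eapply ER_le_trans;
    [| exact (ER_add_le _ _ _ _ (persp_ge F A B t y1 ht hy1 H1) (persp_ge F A' B' t y2 ht hy2 H2))].
  simpl; replace (A * y1 + B * t + (A' * y2 + B' * t)) with (A * y1 + A' * y2 + t * (B + B')) by ring.
  rewrite hB; lra.
Qed.

Lemma lsc_linear A A' : lsc_quad (fun y1 y2 => Fin (A * y1 + A' * y2)).
Proof.
  intros x1 x2 _ t [Ht Hne]; simpl in Ht.
  assert (hlt : t < A * x1 + A' * x2) by (destruct Ht; auto; subst; contradiction).
  assert (0 <= Rabs A) by apply Rabs_pos; assert (0 <= Rabs A') by apply Rabs_pos.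
  set (K := Rabs A + Rabs A' + 1); set (d := (A * x1 + A' * x2 - t) / K).
  assert (hd : 0 < d) by (apply Rdiv_lt_0_compat; unfold K; lra).
  assert (hdK : d * K = A * x1 + A' * x2 - t) by (unfold d; field; unfold K; lra).
  exists d; split; auto; intros y1 y2 _ h1 h2.
  assert (Rabs (A * (y1 - x1) + A' * (y2 - x2)) < A * x1 + A' * x2 - t).
  { eapply Rle_lt_trans; [apply Rabs_triang |]; rewrite !Rabs_mult.
    assert (Rabs A * Rabs (y1 - x1) <= Rabs A * d) by (apply Rmult_le_compat_l; lra).
    assert (Rabs A' * Rabs (y2 - x2) <= Rabs A' * d) by (apply Rmult_le_compat_l; lra).
    unfold K in hdK; nra. }
  apply Rabs_def2 in H1; split; simpl; [lra | intros E; injection E; lra].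
Qed.

(* Since linear functions are lower semicontinuous, a linear minorant of tilde H_F
   on the quadrant is also a minorant of its lsc envelope H_F. *)
Lemma HF_ge F A A' y1 y2 : quad y1 y2 ->
  (forall z1 z2, quad z1 z2 -> ER_le (Fin (A * z1 + A' * z2)) (Htilde F z1 z2)) ->
  ER_le (Fin (A * y1 + A' * y2)) (HF F y1 y2).
Proof.
  intros hq H; apply ER_sup_ge.
  exists (fun z1 z2 => Fin (A * z1 + A' * z2)); repeat split; auto; apply lsc_linear.
Qed.

Lemma Htilde_le F t y : affine_minorant F 0 0 -> t > 0 -> 0 <= y ->
  ER_le (Htilde F 1 y) (ER_add (persp F t 1) (persp F t y)).
Proof.
  intros H0 ht hy; apply (ER_inf_le _ 0); [| exists t; auto].
  intros v [t' [ht' ->]].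
  eapply ER_le_trans;
    [| exact (ER_add_le _ _ _ _ (persp_ge F 0 0 t' 1 ht' ltac:(lra) H0) (persp_ge F 0 0 t' y ht' hy H0))].
  simpl; lra.
Qed.

(* Upper bound on y |-> H_F(1, y) for nonnegative F: a bound G on tilde H_F(1, .)
   valid for y > 0 transfers to H_F(1, .), also at y = 0 provided G(y) < G(0)
   on (0, 1) (an lsc minorant cannot exceed G(0) at 0 without exceeding G nearby). *)
Lemma HF_le F (G : R -> R) x : affine_minorant F 0 0 -> 0 <= x ->
  (forall y, 0 < y -> ER_le (Htilde F 1 y) (Fin (G y))) ->
  (forall y, 0 < y < 1 -> G y < G 0) ->
  ER_le (HF F 1 x) (Fin (G x)).
Proof.
  intros H0 hx HT HG; apply (ER_sup_le _ (Fin (0 * 1 + 0 * x))).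
  { exists (fun z1 z2 => Fin (0 * z1 + 0 * z2)); repeat split; [apply lsc_linear |].
    intros z1 z2 [h1 h2]; apply Htilde_ge with 0 0; auto; lra. }
  intros v [g [hg [hmin ->]]].
  destruct (Rlt_dec 0 x) as [hxp | hx0].
  { eapply ER_le_trans; [apply hmin; split; lra | apply HT; auto]. }
  replace x with 0 in * by lra.
  destruct (classic (ER_le (g 1 0) (Fin (G 0)))) as [ok | nok]; auto.
  apply ER_not_le in nok.
  destruct (hg 1 0 ltac:(split; lra) (G 0) nok) as [d [hd Hd]].
  assert (Rmin d 1 <= d) by apply Rmin_l; assert (Rmin d 1 <= 1) by apply Rmin_r.
  assert (0 < Rmin d 1) by (apply Rmin_pos; lra).
  set (y := Rmin d 1 / 2).
  destruct (Hd 1 y ltac:(split; unfold y; lra) ltac:(rewrite Rminus_diag, Rabs_R0; lra)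
              ltac:(rewrite Rminus_0_r, Rabs_right; unfold y; lra)) as [E _].
  assert (E' := ER_le_trans _ _ _ (ER_le_trans _ _ _ E (hmin 1 y ltac:(split; unfold y; lra)))
                  (HT y ltac:(unfold y; lra))); simpl in E'.
  assert (G y < G 0) by (apply HG; unfold y; lra); lra.
Qed.

(* The function g = gfun a c and its tangent lines.  With p = 1/a >= 1 and
   q = p - 1, the tangent to g at the point x = u^p (u > 0) is
   x |-> alpha(u) + beta(u) x. *)
Definition alpha (a c u : R) : R := - c * sp (1 / a - 1) (u - 1).
Definition beta (a c u : R) : R := c * sp (1 / a - 1) (1 - / u).
Definition tangent (a c u x : R) : R := alpha a c u + beta a c u * x.

Lemma exponent_ge1 a : 0 < a <= 1 -> 1 <= 1 / a.
Proof. intros; apply Rmult_le_reg_r with a; [lra |]; field_simplify; lra. Qed.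

(* The tangent inequality in the variable y = x^a, for a parameter u < 1:
   a consequence of the power-mean inequality with weight 1 - u. *)
Lemma power_tangent_lt1 p u y : 1 <= p -> 0 < u < 1 -> 0 <= y ->
  - rpow (1 - u) (p - 1) * (rpow (/ u) (p - 1) * rpow y p - 1) <= rpow (Rabs (y - 1)) p.
Proof.
  intros hp hu hy.
  set (K := rpow (1 - u) (p - 1)); assert (hK : 0 < K) by (apply rpow_gt0; lra).
  assert (hr : 1 <= rpow (/ u) (p - 1))
    by (apply rpow_ge1; [lra | rewrite <- Rinv_1; apply Rinv_le_contravar; lra]).
  assert (0 <= rpow (Rabs (y - 1)) p) by apply rpow_nonneg.
  destruct (Rle_dec y 1).
  2: { assert (1 <= rpow y p) by (apply rpow_ge1; lra).
       assert (1 * 1 <= rpow (/ u) (p - 1) * rpow y p) by (apply Rmult_le_compat; lra).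
       nra. }
  assert (J := power_mean_ineq (1 - y) y (1 - u) p hp ltac:(lra) hy ltac:(lra)).
  replace (1 - y + y) with 1 in J by ring; replace (1 - (1 - u)) with u in J by ring.
  rewrite rpow_one_base in J; fold K in J.
  rewrite rpow_inv, Rabs_left1 by lra; replace (- (y - 1)) with (1 - y) by ring.
  assert (0 < rpow u (p - 1)) by (apply rpow_gt0; lra).
  assert (K * 1 <= K * (rpow (1 - y) p / K + rpow y p / rpow u (p - 1)))
    by (apply Rmult_le_compat_l; lra).
  replace (K * (rpow (1 - y) p / K + rpow y p / rpow u (p - 1)))
    with (rpow (1 - y) p + K * (/ rpow u (p - 1) * rpow y p)) in H1 by (field; lra).
  lra.
Qed.

(* Same for u > 1, with weight (u - 1)/u. *)
Lemma power_tangent_gt1 p u y : 1 <= p -> 1 < u -> 0 <= y ->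
  rpow (u - 1) (p - 1) * (rpow (/ u) (p - 1) * rpow y p - 1) <= rpow (Rabs (y - 1)) p.
Proof.
  intros hp hu hy.
  set (K := rpow (u - 1) (p - 1)); assert (hK : 0 < K) by (apply rpow_gt0; lra).
  set (r := rpow (/ u) (p - 1)).
  assert (hr0 : 0 < r) by (apply rpow_gt0, Rinv_0_lt_compat; lra).
  assert (hr : r <= 1).
  { apply rpow_le1; [lra | split; [left; apply Rinv_0_lt_compat; lra |]].
    rewrite <- Rinv_1; apply Rinv_le_contravar; lra. }
  assert (0 <= rpow (Rabs (y - 1)) p) by apply rpow_nonneg.
  destruct (Rle_dec 1 y).
  2: { assert (rpow y p <= 1) by (apply rpow_le1; lra).
       assert (0 <= rpow y p) by apply rpow_nonneg.
       assert (r * rpow y p <= 1 * 1) by (apply Rmult_le_compat; lra).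
       nra. }
  assert (hl : 0 < (u - 1) / u < 1).
  { split; [apply Rdiv_lt_0_compat; lra |].
    apply Rmult_lt_reg_r with u; [lra |]; field_simplify; lra. }
  assert (J := power_mean_ineq (y - 1) 1 ((u - 1) / u) p hp ltac:(lra) ltac:(lra) hl).
  replace (y - 1 + 1) with y in J by ring; replace (1 - (u - 1) / u) with (/ u) in J by (field; lra).
  rewrite rpow_one_base, rpow_div in J by lra; fold K r in J.
  assert (er : rpow u (p - 1) = / r) by (unfold r; rewrite rpow_inv, Rinv_inv by lra; auto).
  rewrite er, Rabs_right in * by lra.
  assert (K * r * rpow y p <= K * r * (rpow (y - 1) p / (K / / r) + 1 / r))
    by (apply Rmult_le_compat_l; [apply Rmult_le_pos |]; lra).
  replace (K * r * (rpow (y - 1) p / (K / / r) + 1 / r)) with (rpow (y - 1) p + K) in H0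
    by (field; lra).
  lra.
Qed.

Lemma tangent_le_gfun a c u x : 0 < a <= 1 -> 0 < c -> 0 < u -> 0 <= x ->
  tangent a c u x <= gfun a c x.
Proof.
  intros ha hc hu hx; unfold tangent, alpha, beta, gfun.
  set (p := 1 / a); assert (hp : 1 <= p) by (apply exponent_ge1; auto).
  set (y := rpow x a); assert (hy : 0 <= y) by apply rpow_nonneg.
  assert (xe : x = rpow y p) by (unfold y, p; rewrite rpow_rpow_inv; lra).
  replace (1 - / u) with ((u - 1) * / u) by (field; lra).
  rewrite sp_mul by (apply Rinv_0_lt_compat; lra).
  enough (sp (p - 1) (u - 1) * (rpow (/ u) (p - 1) * rpow y p - 1) <= rpow (Rabs (y - 1)) p).
  { rewrite xe; apply Rle_trans with (c * (sp (p - 1) (u - 1) * (rpow (/ u) (p - 1) * rpow y p - 1)));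
      [right; ring | apply Rmult_le_compat_l; lra]. }
  destruct (Rtotal_order u 1) as [hu1 | [-> | hu1]].
  - rewrite sp_neg by lra; replace (- (u - 1)) with (1 - u) by ring.
    apply power_tangent_lt1; lra.
  - rewrite Rminus_diag, sp_zero, Rmult_0_l; apply rpow_nonneg.
  - rewrite sp_nonneg by lra; apply power_tangent_gt1; lra.
Qed.

Lemma tangent_touches a c x : 0 < a <= 1 -> 0 < x -> tangent a c (rpow x a) x = gfun a c x.
Proof.
  intros ha hx; unfold tangent, alpha, beta, gfun; set (q := 1 / a - 1).
  set (u := rpow x a); assert (hu : 0 < u) by (apply rpow_gt0; lra).
  replace (1 - / u) with ((u - 1) * / u) by (field; lra).
  rewrite sp_mul by (apply Rinv_0_lt_compat; lra).
  assert (xe : x = rpow u (q + 1))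
    by (unfold u, q; replace (1 / a - 1 + 1) with (1 / a) by ring; rewrite rpow_rpow_inv; lra).
  assert (E : rpow (/ u) q * x = u).
  { rewrite xe, rpow_plus, rpow_1, rpow_inv by lra; field; apply Rgt_not_eq, rpow_gt0; lra. }
  replace (- c * sp q (u - 1) + c * (sp q (u - 1) * rpow (/ u) q) * x)
    with (c * (sp q (u - 1) * (rpow (/ u) q * x - 1))) by ring.
  rewrite E, sp_times_self; unfold q; replace (1 / a - 1 + 1) with (1 / a) by ring; auto.
Qed.

Lemma gfun_supergradient a c t x : 0 < a <= 1 -> 0 < c -> 0 < t -> 0 <= x ->
  gfun a c t + beta a c (rpow t a) * (x - t) <= gfun a c x.
Proof.
  intros ha hc ht hx; rewrite <- (tangent_touches a c t) by auto.
  assert (tangent a c (rpow t a) x <= gfun a c x) by (apply tangent_le_gfun; auto; apply rpow_gt0; lra).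
  unfold tangent in *; lra.
Qed.

Lemma beta_mono a c u v : 0 < a <= 1 -> 0 < c -> 0 < u <= v -> beta a c u <= beta a c v.
Proof.
  intros ha hc huv; unfold beta; apply Rmult_le_compat_l; [lra |].
  apply sp_mono; [assert (1 <= 1 / a) by (apply exponent_ge1; auto); lra |].
  assert (/ v <= / u) by (apply Rinv_le_contravar; lra); lra.
Qed.

Lemma Rabs_div_pos x y : 0 < y -> Rabs (x / y) = Rabs x / y.
Proof. intros; unfold Rdiv; rewrite Rabs_mult, Rabs_inv, (Rabs_right y); lra. Qed.

Lemma gfun_sym a c x : 0 < a <= 1 -> 0 < x -> x * gfun a c (/ x) = gfun a c x.
Proof.
  intros ha hx; unfold gfun.
  set (y := rpow x a); assert (hy : 0 < y) by (apply rpow_gt0; lra).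
  rewrite rpow_inv by lra; fold y.
  replace (/ y - 1) with ((1 - y) / y) by (field; lra).
  rewrite Rabs_div_pos, rpow_div by (try apply Rabs_pos; lra).
  replace (rpow y (1 / a)) with x by (unfold y; rewrite rpow_rpow_inv; lra).
  rewrite <- Rabs_Ropp; replace (- (1 - y)) with (y - 1) by ring.
  field; lra.
Qed.

Lemma tangent_sym a c u x : 0 < u -> 0 < x -> x * tangent a c (/ u) (/ x) = tangent a c u x.
Proof.
  intros hu hx; unfold tangent, alpha, beta.
  replace (1 - / / u) with (- (u - 1)) by (rewrite Rinv_inv; ring).
  replace (/ u - 1) with (- (1 - / u)) by ring.
  rewrite !sp_odd; field; lra.
Qed.

Lemma gfun_0 a c : 0 < a -> gfun a c 0 = c.
Proof.
  intros; unfold gfun; rewrite rpow_0, Rabs_left by lra.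
  replace (- (0 - 1)) with 1 by ring; rewrite rpow_one_base; ring.
Qed.

Lemma gfun_lt_c a c y : 0 < a <= 1 -> 0 < c -> 0 < y < 1 -> gfun a c y < c.
Proof.
  intros ha hc hy; unfold gfun.
  assert (rpow y a < 1) by (apply rpow_lt1; lra).
  assert (0 < rpow y a) by (apply rpow_gt0; lra).
  assert (rpow (Rabs (rpow y a - 1)) (1 / a) < 1).
  { apply rpow_lt1; [apply Rdiv_lt_0_compat; lra | rewrite Rabs_left; lra]. }
  nra.
Qed.

(* The choice theta = ((1 + y^a)/2)^(1/a) in tilde H_g(1, y) realizes
   hat g(theta, 1) + hat g(theta, y) = 2^(1 - 1/a) g(y). *)
Lemma gfun_optimal_theta a c y : 0 < a <= 1 -> 0 < y ->
  let th := rpow ((1 + rpow y a) / 2) (1 / a) in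
  0 < th /\ 1 * gfun a c (th / 1) + y * gfun a c (th / y) = gfun a c y / Rpower 2 (1 / a - 1).
Proof.
  intros ha hy th; unfold th.
  set (z := rpow y a); assert (hz : 0 < z) by (apply rpow_gt0; lra).
  set (m := (1 + z) / 2); set (th' := rpow m (1 / a)).
  assert (hth : 0 < th') by (apply rpow_gt0; unfold m; lra).
  split; auto.
  assert (e1 : rpow (th' / 1) a = m)
    by (rewrite Rdiv_1_r; unfold th'; rewrite rpow_rpow by (unfold m; lra);
        replace (1 / a * a) with 1 by (field; lra); apply rpow_1; unfold m; lra).
  assert (e2 : rpow (th' / y) a = m / z) by (rewrite rpow_div, <- e1, Rdiv_1_r by lra; auto).
  unfold gfun; rewrite e1, e2.
  replace (m - 1) with ((z - 1) / 2) by (unfold m; field).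
  replace (m / z - 1) with ((1 - z) / (2 * z)) by (unfold m; field; lra).
  rewrite !Rabs_div_pos, !rpow_div, rpow_mult by (try apply Rabs_pos; lra).
  replace (rpow z (1 / a)) with y by (unfold z; rewrite rpow_rpow_inv; lra).
  rewrite <- (Rabs_Ropp (1 - z)); replace (- (1 - z)) with (z - 1) by ring.
  assert (e4 : rpow 2 (1 / a) = 2 * Rpower 2 (1 / a - 1)).
  { replace (1 / a) with (1 + (1 / a - 1)) at 1 by ring.
    rewrite rpow_plus, rpow_1, rpow_pos by lra; auto. }
  rewrite e4; assert (0 < Rpower 2 (1 / a - 1)) by apply Rpower_pos.
  fold z; field; split; lra.
Qed.

Lemma beta_opposite a c w : 0 < w -> beta a c ((1 + w) / 2) + beta a c ((1 + / w) / 2) = 0.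
Proof.
  intros hw; unfold beta.
  replace (1 - / ((1 + / w) / 2)) with (- (1 - / ((1 + w) / 2))) by (field; lra).
  rewrite sp_odd; ring.
Qed.

Lemma alpha_combination a c w x : 0 < w ->
  Rpower 2 (1 / a - 1) * (alpha a c ((1 + w) / 2) * 1 + alpha a c ((1 + / w) / 2) * x)
  = tangent a c w x.
Proof.
  intros hw; unfold tangent, alpha, beta; set (q := 1 / a - 1).
  replace ((1 + w) / 2 - 1) with ((w - 1) * / 2) by field.
  replace ((1 + / w) / 2 - 1) with (- (w - 1) * / (2 * w)) by (field; lra).
  replace (1 - / w) with ((w - 1) * / w) by (field; lra).
  rewrite !sp_mul by (apply Rinv_0_lt_compat; lra).
  rewrite sp_odd, Rinv_mult, rpow_mult by (left; apply Rinv_0_lt_compat; lra).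
  rewrite rpow_inv, (rpow_pos 2) by lra.
  assert (0 < Rpower 2 q) by apply Rpower_pos; field; lra.
Qed.

Lemma half_parameters_range X w : 1 < X -> / (2 * X - 1) < w < 2 * X - 1 ->
  / X < (1 + w) / 2 < X /\ / X < (1 + / w) / 2 < X.
Proof.
  intros hX [h1 h2].
  assert (h0 : 0 < / (2 * X - 1)) by (apply Rinv_0_lt_compat; lra).
  assert (key : / X <= (1 + / (2 * X - 1)) / 2).
  { apply Rmult_le_reg_r with (2 * X * (2 * X - 1)); [nra |]; field_simplify; nra. }
  assert (/ (2 * X - 1) < / w < 2 * X - 1).
  { split; [apply Rinv_lt_contravar; nra |].
    rewrite <- (Rinv_inv (2 * X - 1)); apply Rinv_lt_contravar; [apply Rmult_lt_0_compat |]; lra. }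
  split; split; lra.
Qed.

Definition pinched (a c X : R) (F : R -> ER) : Prop :=
  (forall x, 0 <= x -> ER_le (F x) (Fin (gfun a c x))) /\
  (forall u, / X < u < X -> affine_minorant F (alpha a c u) (beta a c u)).

(* The tangent with parameter 1 is the zero function, so pinched functions are nonnegative. *)
Lemma pinched_nonneg a c X F : 1 < X -> pinched a c X F -> affine_minorant F 0 0.
Proof.
  intros hX [_ H].
  assert (h1 : / X < 1 < X) by (split; [rewrite <- Rinv_1; apply Rinv_lt_contravar |]; lra).
  specialize (H 1 h1); unfold alpha, beta in H.
  rewrite Rinv_1, !Rminus_diag, sp_zero, !Rmult_0_r in H; auto.
Qed.

Lemma pinched_mono a c X X' F : 1 < X' <= X -> pinched a c X F -> pinched a c X' F.
Proof.
  intros hX [H1 H2]; split; auto; intros u hu; apply H2.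
  assert (/ X <= / X') by (apply Rinv_le_contravar; lra); lra.
Qed.

(* T_a does not push a nonnegative F above g: bound tilde H_F(1, y) by the
   optimal theta of [gfun_optimal_theta], then pass to H_F with [HF_le]. *)
Lemma Ta_below_gfun a c F x : 0 < a <= 1 -> 0 < c -> affine_minorant F 0 0 ->
  (forall y, 0 <= y -> ER_le (F y) (Fin (gfun a c y))) -> 0 <= x ->
  ER_le (Ta a F x) (Fin (gfun a c x)).
Proof.
  intros ha hc H0 HU hx; unfold Ta.
  set (K := Rpower 2 (1 / a - 1)); assert (hK : 0 < K) by apply Rpower_pos.
  assert (E : ER_le (HF F 1 x) (Fin (gfun a c x / K))).
  { apply (HF_le F (fun y => gfun a c y / K)); auto.
    - intros y hy; destruct (gfun_optimal_theta a c y ha hy) as [hth Heq]; fold K in Heq.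
      set (th := rpow ((1 + rpow y a) / 2) (1 / a)) in *.
      eapply ER_le_trans; [apply (Htilde_le F th y H0 hth); lra |].
      assert (E1 := persp_le F th 1 _ ltac:(lra) (HU (th / 1) ltac:(apply Rle_mult_inv_pos; lra))).
      assert (E2 := persp_le F th y _ hy (HU (th / y) ltac:(apply Rle_mult_inv_pos; lra))).
      eapply ER_le_trans; [exact (ER_add_le _ _ _ _ E1 E2) |]; simpl; lra.
    - intros y hy; rewrite gfun_0 by lra.
      assert (gfun a c y < c) by (apply gfun_lt_c; auto).
      apply Rmult_lt_compat_r; [apply Rinv_0_lt_compat |]; lra. }
  assert (E' := ER_scale_le K _ _ hK E); simpl in E'.
  replace (K * (gfun a c x / K)) with (gfun a c x) in E' by (field; lra); exact E'.
Qed.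

Lemma Ta_above_tangent a c X F w : 1 < X -> pinched a c X F -> / (2 * X - 1) < w < 2 * X - 1 ->
  affine_minorant (Ta a F) (alpha a c w) (beta a c w).
Proof.
  intros hX [_ HL] hw x hx.
  assert (hw0 : 0 < w) by (assert (0 < / (2 * X - 1)) by (apply Rinv_0_lt_compat; lra); lra).
  destruct (half_parameters_range X w hX hw) as [r1 r2].
  assert (E : ER_le (Fin (alpha a c ((1 + w) / 2) * 1 + alpha a c ((1 + / w) / 2) * x)) (HF F 1 x)).
  { apply HF_ge; [split; lra |]; intros z1 z2 [h1 h2].
    apply Htilde_ge with (beta a c ((1 + w) / 2)) (beta a c ((1 + / w) / 2)); auto.
    apply beta_opposite; auto. }
  eapply ER_le_trans; [| exact (ER_scale_le _ _ _ (Rpower_pos 2 (1 / a - 1)) E)].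
  simpl; rewrite alpha_combination by auto; unfold tangent; lra.
Qed.

Lemma pinched_step a c X F : 0 < a <= 1 -> 0 < c -> 1 < X ->
  pinched a c X F -> pinched a c (2 * X - 1) (Ta a F).
Proof.
  intros ha hc hX HI; split.
  - intros x hx; apply Ta_below_gfun; auto; [apply (pinched_nonneg a c X) | apply HI]; auto.
  - intros w hw; apply (Ta_above_tangent a c X); auto.
Qed.

Lemma exists_small d1 d2 : 0 < d1 -> 0 < d2 -> exists h, 0 < h < d1 /\ h < d2.
Proof.
  intros; exists (Rmin d1 d2 / 2).
  assert (Rmin d1 d2 <= d1) by apply Rmin_l; assert (Rmin d1 d2 <= d2) by apply Rmin_r.
  assert (0 < Rmin d1 d2) by (apply Rmin_pos; lra); lra.
Qed.

Lemma left_deriv_le f x l m d : left_deriv f x l -> 0 < d ->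
  (forall h, 0 < h < d -> (f x - f (x - h)) / h <= m) -> l <= m.
Proof.
  intros Hl hd Hm; destruct (Rle_dec l m) as [ok | nok]; auto.
  destruct (Hl (l - m) ltac:(lra)) as [d' [hd' Hd']].
  destruct (exists_small d' d hd' hd) as [h [hh hh']].
  specialize (Hd' h hh); specialize (Hm h ltac:(lra)); apply Rabs_def2 in Hd'; lra.
Qed.

Lemma left_deriv_ge f x l m d : left_deriv f x l -> 0 < d ->
  (forall h, 0 < h < d -> m <= (f x - f (x - h)) / h) -> m <= l.
Proof.
  intros Hl hd Hm; destruct (Rle_dec m l) as [ok | nok]; auto.
  destruct (Hl (m - l) ltac:(lra)) as [d' [hd' Hd']].
  destruct (exists_small d' d hd' hd) as [h [hh hh']].
  specialize (Hd' h hh); specialize (Hm h ltac:(lra)); apply Rabs_def2 in Hd'; lra.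
Qed.

Definition tends_at_0plus (f : R -> ER) (l0 : R) : Prop :=
  forall eps, eps > 0 -> exists d, d > 0 /\ forall s, 0 < s < d ->
    exists x, f s = Fin x /\ Rabs (x - l0) < eps.

Lemma limit_ge_affine f l0 A B d0 : tends_at_0plus f l0 -> 0 < d0 ->
  (forall s x, 0 < s < d0 -> f s = Fin x -> A + B * s <= x) -> A <= l0.
Proof.
  intros Hl hd0 Hb; destruct (Rle_dec A l0) as [ok | nok]; auto.
  set (eps := (A - l0) / 2); assert (heps : eps > 0) by (unfold eps; lra).
  destruct (Hl eps heps) as [d [hd Hd]].
  assert (hB : 0 < Rabs B + 1) by (assert (0 <= Rabs B) by apply Rabs_pos; lra).
  destruct (exists_small d (Rmin d0 (eps / (Rabs B + 1))) hd) as [s [hs hs']].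
  { apply Rmin_pos; [lra | apply Rdiv_lt_0_compat; lra]. }
  assert (s < d0) by (assert (Hm := Rmin_l d0 (eps / (Rabs B + 1))); lra).
  assert (s * (Rabs B + 1) < eps).
  { assert (Hm := Rmin_r d0 (eps / (Rabs B + 1))).
    replace eps with (eps / (Rabs B + 1) * (Rabs B + 1)) by (field; lra).
    apply Rmult_lt_compat_r; lra. }
  destruct (Hd s ltac:(lra)) as [x [Hx Hab]].
  assert (Hb' := Hb s x ltac:(lra) Hx).
  assert (- Rabs B <= B) by (rewrite <- Rabs_Ropp; assert (Hab_B := RRle_abs (- B)); lra).
  apply Rabs_def2 in Hab; unfold eps in *; nra.
Qed.

Lemma limit_le f l0 A d0 : tends_at_0plus f l0 -> 0 < d0 ->
  (forall s x, 0 < s < d0 -> f s = Fin x -> x <= A) -> l0 <= A.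
Proof.
  intros Hl hd0 Hb; destruct (Rle_dec l0 A) as [ok | nok]; auto.
  destruct (Hl ((l0 - A) / 2) ltac:(lra)) as [d [hd Hd]].
  destruct (exists_small d d0 hd hd0) as [s [hs hs']].
  destruct (Hd s ltac:(lra)) as [x [Hx Hab]].
  specialize (Hb s x ltac:(lra) Hx); apply Rabs_def2 in Hab; lra.
Qed.

Section InitialFunction.

Variables (a b c kappa : R) (Fb : R -> ER).
Hypotheses (ha : 0 < a <= 1) (hb : b > 1) (hc : c > 0)
  (hkappa : left_deriv (gfun a c) b kappa)
  (hmid : forall s, / b <= s <= b -> Fb s = Fin (gfun a c s))
  (hright : forall s, s >= b -> Fb s = Fin (gfun a c b + kappa * (s - b)))
  (hleft : forall s, 0 < s <= / b -> Fb s = ER_scale s (Fb (/ s))).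

Let X0 := rpow b a.

Lemma X0_gt1 : 1 < X0.
Proof. unfold X0; rewrite <- (rpow_one_base a); apply rpow_lt; lra. Qed.

Lemma parameter_pos u : / X0 < u < X0 -> 0 < u.
Proof. intros; assert (0 < / X0) by (apply Rinv_0_lt_compat; generalize X0_gt1; lra); lra. Qed.

Lemma parameter_inv u : / X0 < u < X0 -> / X0 < / u < X0.
Proof.
  intros hu; assert (hX := X0_gt1); assert (hu0 := parameter_pos u hu).
  assert (0 < / X0) by (apply Rinv_0_lt_compat; lra).
  split; [apply Rinv_lt_contravar; nra |].
  rewrite <- (Rinv_inv X0); apply Rinv_lt_contravar; [apply Rmult_lt_0_compat |]; lra.
Qed.

Lemma kappa_le : kappa <= beta a c X0.
Proof.
  apply (left_deriv_le (gfun a c) b kappa _ (b - 1) hkappa); [lra |]; intros h hh.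
  assert (gfun a c b + beta a c X0 * (b - h - b) <= gfun a c (b - h))
    by (apply gfun_supergradient; lra).
  apply Rmult_le_reg_r with h; [lra |]; unfold Rdiv; rewrite Rmult_assoc, Rinv_l; lra.
Qed.

Lemma kappa_ge u : / X0 < u < X0 -> beta a c u <= kappa.
Proof.
  intros hu; assert (hu0 := parameter_pos u hu).
  assert (ht0 : rpow u (1 / a) < b).
  { replace b with (rpow X0 (1 / a)) by (unfold X0; apply rpow_rpow_inv; lra).
    apply rpow_lt; [apply Rdiv_lt_0_compat |]; lra. }
  assert (0 < rpow u (1 / a)) by (apply rpow_gt0; lra).
  apply (left_deriv_ge (gfun a c) b kappa _ (b - rpow u (1 / a)) hkappa); [lra |]; intros h hh.
  assert (gfun a c (b - h) + beta a c (rpow (b - h) a) * (b - (b - h)) <= gfun a c b)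
    by (apply gfun_supergradient; lra).
  assert (beta a c u <= beta a c (rpow (b - h) a)).
  { apply beta_mono; auto; split; auto.
    replace u with (rpow (rpow u (1 / a)) a)
      by (rewrite rpow_rpow by lra; replace (1 / a * a) with 1 by (field; lra); apply rpow_1; lra).
    apply rpow_le; lra. }
  apply Rmult_le_reg_r with h; [lra |]; unfold Rdiv; rewrite Rmult_assoc, Rinv_l; nra.
Qed.

(* On [b, oo), F_b is the line through (b, g(b)) with slope kappa: it stays below g
   (convexity and kappa <= beta(X0)) and above the tangents (beta(u) <= kappa). *)
Lemma Fb_right x : x >= b -> exists v, Fb x = Fin v /\ v <= gfun a c x /\
  forall u, / X0 < u < X0 -> tangent a c u x <= v.
Proof.
  intros hx; exists (gfun a c b + kappa * (x - b)); split; [apply hright; auto | split].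
  - assert (gfun a c b + beta a c X0 * (x - b) <= gfun a c x) by (apply gfun_supergradient; lra).
    assert (K := kappa_le); nra.
  - intros u hu; assert (hu0 := parameter_pos u hu).
    assert (tangent a c u b <= gfun a c b) by (apply tangent_le_gfun; lra).
    assert (K := kappa_ge u hu); unfold tangent in *; nra.
Qed.

(* The same holds at every x > 0: on [1/b, b] F_b = g, and on (0, 1/b] by the
   symmetry F(x) = x F(1/x) shared by g and the family of tangents. *)
Lemma Fb_pos x : 0 < x -> exists v, Fb x = Fin v /\ v <= gfun a c x /\
  forall u, / X0 < u < X0 -> tangent a c u x <= v.
Proof.
  intros hx; destruct (Rle_dec b x) as [h1 | h1]; [apply Fb_right; lra |].
  destruct (Rle_dec (/ b) x) as [h2 | h2].
  - exists (gfun a c x); split; [apply hmid; lra | split; [lra |]].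
    intros u hu; apply tangent_le_gfun; auto; [apply parameter_pos |]; lra.
  - assert (hx' : / x >= b)
      by (rewrite <- (Rinv_inv b); apply Rle_ge, Rinv_le_contravar; lra).
    destruct (Fb_right (/ x) hx') as [v [E [Hu Hl]]].
    exists (x * v); split; [rewrite hleft, E by lra; reflexivity | split].
    + rewrite <- gfun_sym by auto; apply Rmult_le_compat_l; lra.
    + intros u hu; assert (hu0 := parameter_pos u hu).
      rewrite <- tangent_sym by auto; apply Rmult_le_compat_l; [lra |].
      apply Hl, parameter_inv; auto.
Qed.

(* At 0 the bounds pass to the limit value F_b(0). *)
Lemma Fb_pinched l0 : Fb 0 = Fin l0 -> tends_at_0plus Fb l0 -> pinched a c X0 Fb.
Proof.
  intros E0 Hl0; split.
  - intros x hx; destruct (Req_dec x 0) as [-> | hx0].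
    + rewrite E0, gfun_0 by lra; simpl.
      apply (limit_le Fb l0 c 1); auto; [lra |]; intros s v hs Ev.
      destruct (Fb_pos s ltac:(lra)) as [v' [Ev' [Hu _]]]; rewrite Ev in Ev'; injection Ev' as <-.
      assert (gfun a c s < c) by (apply gfun_lt_c; auto; lra); lra.
    + destruct (Fb_pos x ltac:(lra)) as [v [Ev [Hu _]]]; rewrite Ev; auto.
  - intros u hu x hx; destruct (Req_dec x 0) as [-> | hx0].
    + rewrite E0, Rmult_0_r, Rplus_0_r; simpl.
      apply (limit_ge_affine Fb l0 (alpha a c u) (beta a c u) 1); auto; [lra |].
      intros s v hs Ev; destruct (Fb_pos s ltac:(lra)) as [v' [Ev' [_ Hl]]].
      rewrite Ev in Ev'; injection Ev' as <-; apply Hl; auto.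
    + destruct (Fb_pos x ltac:(lra)) as [v [Ev [_ Hl]]]; rewrite Ev; apply Hl; auto.
Qed.

End InitialFunction.

Fixpoint level (X0 : R) (n : nat) : R :=
  match n with O => X0 | S n => 2 * level X0 n - 1 end.

Lemma level_gt1 X0 n : 1 < X0 -> 1 < level X0 n.
Proof. intros h; induction n; simpl; lra. Qed.

Lemma level_mono X0 N n : 1 < X0 -> (N <= n)%nat -> level X0 N <= level X0 n.
Proof.
  intros h hn; induction hn; [lra | simpl].
  assert (1 < level X0 m) by (apply level_gt1; auto); lra.
Qed.

Lemma level_linear_bound X0 n : 1 < X0 -> 1 + INR n * (X0 - 1) <= level X0 n.
Proof.
  intros h; induction n as [| n IH]; simpl level; [simpl; lra |].
  rewrite S_INR; assert (0 <= INR n) by apply pos_INR.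
  assert (X0 <= level X0 n) by (apply (level_mono X0 0); auto; lia); lra.
Qed.

Lemma level_unbounded X0 M : 1 < X0 -> exists N, M < level X0 N.
Proof.
  intros h; destruct (INR_unbounded ((M - 1) / (X0 - 1))) as [N hN]; exists N.
  assert (INR N * (X0 - 1) > M - 1).
  { apply Rmult_lt_reg_r with (/ (X0 - 1)); [apply Rinv_0_lt_compat; lra |].
    rewrite Rmult_assoc, Rinv_r by lra; unfold Rdiv in hN; lra. }
  assert (Hlin := level_linear_bound X0 N h); lra.
Qed.

Lemma iterates_pinched_eventually a c X0 F M : 0 < a <= 1 -> 0 < c -> 1 < X0 ->
  pinched a c X0 F ->
  exists N, forall n, (n >= N)%nat -> exists X, M < X /\ pinched a c X (Ta_iter a n F).
Proof.
  intros ha hc hX0 HF.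
  assert (Hn : forall n, pinched a c (level X0 n) (Ta_iter a n F)).
  { induction n; [exact HF |]; apply pinched_step; auto; apply level_gt1; auto. }
  destruct (level_unbounded X0 M hX0) as [N hN]; exists N; intros n hn.
  exists (level X0 N); split; auto.
  apply (pinched_mono a c (level X0 n)); [split; [apply level_gt1 | apply level_mono] | apply Hn]; auto.
Qed.

Lemma pinched_at_pos a c X F s : 0 < a <= 1 -> 0 < s -> / X < rpow s a < X ->
  pinched a c X F -> F s = Fin (gfun a c s).
Proof.
  intros ha hs hu [HU HL].
  assert (L := HL _ hu s ltac:(lra)); fold (tangent a c (rpow s a) s) in L.
  rewrite tangent_touches in L by lra.
  destruct (ER_sandwich _ _ _ L (HU s ltac:(lra))) as [x [-> hx]].
  f_equal; lra.
Qed.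

(* At 0, the tangent with parameter u = 2/X gives F(0) >= c (1 - u)^q >= c (1 - 4 q / X). *)
Lemma pinched_at_zero a c X F : 0 < a <= 1 -> 0 < c -> 4 <= X -> pinched a c X F ->
  exists x, F 0 = Fin x /\ c - 4 * c * (1 / a - 1) / X <= x <= c.
Proof.
  intros ha hc hX [HU HL]; set (q := 1 / a - 1).
  assert (hq : 0 <= q) by (assert (1 <= 1 / a) by (apply exponent_ge1; auto); unfold q; lra).
  set (u := 2 / X).
  assert (hu : / X < u < X /\ 0 < u <= 1 / 2).
  { unfold u, Rdiv; assert (0 < / X) by (apply Rinv_0_lt_compat; lra).
    assert (X * / X = 1) by (apply Rinv_r; lra); nra. }
  assert (L := HL u (proj1 hu) 0 ltac:(lra)); assert (U := HU 0 ltac:(lra)).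
  rewrite gfun_0 in U by lra.
  destruct (ER_sandwich _ _ _ L U) as [x [Ex [lo hi]]]; exists x; split; auto; split; auto.
  unfold alpha in lo; fold q in lo; rewrite Rmult_0_r, Rplus_0_r, sp_neg in lo by lra.
  replace (- (u - 1)) with (1 - u) in lo by ring.
  assert (R := rpow_lower_bound (1 - u) q ltac:(lra) hq).
  assert (q * (1 - (1 - u)) / (1 - u) <= 2 * q * u).
  { apply Rmult_le_reg_r with (1 - u); [lra |]; unfold Rdiv; rewrite Rmult_assoc, Rinv_l by lra.
    assert (0 <= q * u * (1 - 2 * u)) by (apply Rmult_le_pos; [apply Rmult_le_pos |]; lra); nra. }
  assert (c * (1 - 2 * q * u) <= c * rpow (1 - u) q) by (apply Rmult_le_compat_l; lra).
  replace (4 * c * q / X) with (c * (2 * q * u)) by (unfold u; field; lra); lra.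
Qed.

Lemma pinched_approximates a c s eps : 0 < a <= 1 -> 0 < c -> 0 <= s -> eps > 0 ->
  exists M, forall X F, M < X -> pinched a c X F ->
    exists x, F s = Fin x /\ Rabs (x - gfun a c s) < eps.
Proof.
  intros ha hc hs heps; destruct (Req_dec s 0) as [-> | hs0].
  - set (q := 1 / a - 1); exists (Rmax 4 (4 * c * q / eps)); intros X F hX HX.
    assert (4 <= Rmax 4 (4 * c * q / eps)) by apply Rmax_l.
    assert (4 * c * q / eps <= Rmax 4 (4 * c * q / eps)) by apply Rmax_r.
    destruct (pinched_at_zero a c X F ha hc ltac:(lra) HX) as [x [Ex Hx]]; fold q in Hx.
    exists x; split; auto; rewrite gfun_0 by lra.
    assert (4 * c * q / X < eps).
    { apply Rmult_lt_reg_r with (X / eps); [apply Rdiv_lt_0_compat; lra |].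
      replace (4 * c * q / X * (X / eps)) with (4 * c * q / eps) by (field; lra).
      replace (eps * (X / eps)) with X by (field; lra); lra. }
    rewrite Rabs_left1; lra.
  - assert (hs_pos : 0 < s) by lra.
    set (u := rpow s a); assert (hu : 0 < u) by (apply rpow_gt0; lra).
    exists (Rmax u (/ u)); intros X F hX HX.
    assert (u <= Rmax u (/ u)) by apply Rmax_l; assert (/ u <= Rmax u (/ u)) by apply Rmax_r.
    assert (/ X < u).
    { rewrite <- (Rinv_inv u); apply Rinv_lt_contravar; [| lra].
      apply Rmult_lt_0_compat; [apply Rinv_0_lt_compat |]; lra. }
    exists (gfun a c s); split; [apply (pinched_at_pos a c X); auto; fold u; lra |].
    rewrite Rminus_diag, Rabs_R0; lra.
Qed.

Theorem mainTheorem11 (a b c kappa : R) (Fb : R -> ER)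
  (ha : 0 < a <= 1) (hb : b > 1) (hc : c > 0)
  (hkappa : left_deriv (gfun a c) b kappa)
  (hmid : forall s, / b <= s <= b -> Fb s = Fin (gfun a c s))
  (hright : forall s, s >= b -> Fb s = Fin (gfun a c b + kappa * (s - b)))
  (hleft : forall s, 0 < s <= / b -> Fb s = ER_scale s (Fb (/ s)))
  (hzero : exists l0, Fb 0 = Fin l0 /\
     forall eps, eps > 0 -> exists d, d > 0 /\ forall s, 0 < s < d ->
       exists x, Fb s = Fin x /\ Rabs (x - l0) < eps) :
  forall s, 0 <= s -> ER_seq_cv (fun n => Ta_iter a n Fb s) (gfun a c s).
Proof.
  intros s hs eps heps.
  destruct hzero as [l0 [E0 Hl0]].
  assert (Hinit := Fb_pinched a b c kappa Fb ha hb hc hkappa hmid hright hleft l0 E0 Hl0).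
  destruct (pinched_approximates a c s eps ha hc hs heps) as [M HM].
  destruct (iterates_pinched_eventually a c _ Fb M ha hc (X0_gt1 a b ha hb) Hinit) as [N HN].
  exists N; intros n hn; destruct (HN n hn) as [X [hX HX]].
  exact (HM X _ hX HX).
Qed.
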